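(* Let $\mathcal A=\mathbb CS_3\cong M_2(\mathbb C)\oplus\mathbb C\oplus\mathbb C$ with its Hopf algebra structure $\Delta g=g\otimes g$, $\epsilon(g)=1$, $S(g)=g^{-1}$. Let $(\mathcal A,\mathcal H,\pi,J,\gamma)$ be any finite complex spectral triple with Dirac operator $D$ whose first-order calculus $(\Omega^1_D,d_D)$, $\Omega^1_D=\mathrm{span}\{\pi(a)[D,\pi(b)]\}$, $d_Da=[D,\pi(a)]$, is nonzero. Then $(\Omega^1_D,d_D)$ is not isomorphic (as an $\mathcal A$-bimodule with derivation) to any bicovariant first-order differential calculus over the Hopf algebra $\mathbb CS_3$.
   Context: A finite complex spectral triple over $\mathcal A=\bigoplus_i M_{n_i}(\mathbb C)$: a finite-dimensional Hilbert space $\mathcal H$, a faithful $*$-representation $\pi$, an antilinear isometry $J$ with $J^2=1$ such that $\pi^0(a):=J\pi(a)^*J$ is a representation of the opposite algebra commuting with $\pi(\mathcal A)$, and a grading $\gamma=\gamma^*$, $\gamma^2=1$, commuting with $J$ and $\pi(\mathcal A)$ and of the form $\sum_m\pi(x_m)\pi^0(y_m)$. A Dirac operator is a self-adjoint $D$ with $DJ=JD$, $D\gamma=-\gamma D$, $[[D,\pi(a)],\pi^0(b)]=0$ for all $a,b$. Here $\mathcal A$-bimodule structure on $\Omega^1_D$ is via $\pi$ (left and right operator multiplication), with the identification $\mathbb CS_3\cong M_2(\mathbb C)\oplus\mathbb C\oplus\mathbb C$ given by the direct sum of the 2-dimensional irreducible, trivial and sign representations of $S_3$. A first-order differential calculus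 $(\Omega^1,d)$ over a Hopf algebra $\mathcal B$ is bicovariant (in Woronowicz's sense) if there are a left coaction $\Delta_L:\Omega^1\to\mathcal B\otimes\Omega^1$ and a right coaction $\Delta_R:\Omega^1\to\Omega^1\otimes\mathcal B$, commuting with each other, making $\Omega^1$ a bicovariant bimodule, such that $\Delta_L(x\,dy)=\Delta(x)(\mathrm{id}\otimes d)\Delta(y)$ and $\Delta_R(x\,dy)=\Delta(x)(d\otimes\mathrm{id})\Delta(y)$. *)

From HB Require Import structures.
From mathcomp Require Import all_boot all_algebra all_fingroup.
From mathcomp Require Import reals complex.
Set Implicit Arguments.
Unset Strict Implicit.
Unset Printing Implicit Defensive.
Import GRing.Theory Num.Theory.
Local Open Scope ring_scope.

(* The complex numbers are modelled as R[i] for an arbitrary realType R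
   (every realType is isomorphic to the reals). *)

Section Defs.
Variable R : realType.
Local Notation C := R[i].

(* The group algebra CS_3: functions S_3 -> C, a = sum_g a(g) g.       *)
Definition CS3 := {ffun 'S_3 -> C}.

Definition bas (g : 'S_3) : CS3 := [ffun x => (x == g)%:R].

Definition mulA (a b : CS3) : CS3 :=
  [ffun g => \sum_(h : 'S_3) a h * b (h^-1 * g)%g].

Definition oneA : CS3 := bas 1%g.

(* the *-structure transported from M_2(C)+C+C through the (unitary)
   irreducible representations: g^* = g^{-1}, extended antilinearly *)
Definition starA (a : CS3) : CS3 := [ffun g => (a (g^-1)%g)^*].

(* Finite-dimensional Hilbert space C^n, operators = n x n matrices.    *)
Definition adjm n (A : 'M[C]_n) : 'M[C]_n := map_mx (fun z : C => z^*) A^T.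

Definition cinner n (u v : 'cV[C]_n) : C := \sum_(i < n) (u i 0)^* * v i 0.

Definition commut n (A B : 'M[C]_n) : 'M[C]_n := A *m B - B *m A.

Definition mat_of n (f : 'cV[C]_n -> 'cV[C]_n) : 'M[C]_n :=
  \matrix_(i < n, j < n) f (delta_mx j 0) i 0.

Definition antilinear n (J : 'cV[C]_n -> 'cV[C]_n) :=
  forall (c : C) (u v : 'cV[C]_n), J (c *: u + v) = c^* *: J u + J v.

Definition faithful_star_rep n (pi : CS3 -> 'M[C]_n) :=
  [/\ forall (c : C) (a b : CS3), pi (c *: a + b) = c *: pi a + pi b,
      forall a b, pi (mulA a b) = pi a *m pi b,
      forall a, pi (starA a) = adjm (pi a)
    & injective pi].

Definition opp_rep n (pi : CS3 -> 'M[C]_n) (J : 'cV[C]_n -> 'cV[C]_n)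
  (a : CS3) : 'M[C]_n := mat_of (fun v => J (adjm (pi a) *m J v)).

Definition finite_spectral_triple n (pi : CS3 -> 'M[C]_n)
  (J : 'cV[C]_n -> 'cV[C]_n) (gamma : 'M[C]_n) :=
  [/\ faithful_star_rep pi,
      [/\ antilinear J,
          forall v, cinner (J v) (J v) = cinner v v
        & forall v, J (J v) = v],
      [/\ forall (c : C) (a b : CS3),
            opp_rep pi J (c *: a + b) = c *: opp_rep pi J a + opp_rep pi J b,
          forall a b, opp_rep pi J (mulA a b) = opp_rep pi J b *m opp_rep pi J a
        & forall a b, pi a *m opp_rep pi J b = opp_rep pi J b *m pi a]
    &
      [/\ adjm gamma = gamma,
          gamma *m gamma = 1%:M,
          forall v, gamma *m J v = J (gamma *m v),
          forall a, gamma *m pi a = pi a *m gamma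
        & exists s : seq (CS3 * CS3),
            gamma = \sum_(p <- s) pi p.1 *m opp_rep pi J p.2]].

Definition dirac_operator n (pi : CS3 -> 'M[C]_n)
  (J : 'cV[C]_n -> 'cV[C]_n) (gamma D : 'M[C]_n) :=
  [/\ adjm D = D,
      forall v, D *m J v = J (D *m v),
      D *m gamma = - (gamma *m D)
    & forall a b, commut (commut D (pi a)) (opp_rep pi J b) = 0].

Definition in_OmegaD n (pi : CS3 -> 'M[C]_n) (D : 'M[C]_n) (w : 'M[C]_n) :=
  exists s : seq (CS3 * CS3), w = \sum_(p <- s) pi p.1 *m commut D (pi p.2).

Definition is_bimodule (V : lmodType C) (la : CS3 -> V -> V)
  (ra : V -> CS3 -> V) :=
  [/\ [/\ forall a (c : C) u v, la a (c *: u + v) = c *: la a u + la a v,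
          forall a b (c : C) v, la (c *: a + b) v = c *: la a v + la b v,
          forall a (c : C) u v, ra (c *: u + v) a = c *: ra u a + ra v a
        & forall a b (c : C) v, ra v (c *: a + b) = c *: ra v a + ra v b],
      forall a b v, la (mulA a b) v = la a (la b v),
      forall v a b, ra v (mulA a b) = ra (ra v a) b,
      forall a v b, ra (la a v) b = la a (ra v b)
    & (forall v, la oneA v = v) /\ (forall v, ra v oneA = v)].

Definition is_fodc (V : lmodType C) (la : CS3 -> V -> V)
  (ra : V -> CS3 -> V) (d : CS3 -> V) :=
  [/\ is_bimodule la ra,
      forall (c : C) a b, d (c *: a + b) = c *: d a + d b,
      forall a b, d (mulA a b) = la a (d b) + ra (d a) b
    & forall v, exists s : seq (CS3 * CS3), v = \sum_(p <- s) la p.1 (d p.2)].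

(* Elements of CS_3 (x) V are written sum_g g (x) w_g and encoded by the
   family (w_g)_g : {ffun 'S_3 -> V}; likewise V (x) CS_3 (sum_g w_g (x) g).
   The Hopf structure is Delta g = g (x) g, eps g = 1, S g = g^{-1}. *)
Definition is_bicovariant_fodc (V : lmodType C) (la : CS3 -> V -> V)
  (ra : V -> CS3 -> V) (d : CS3 -> V)
  (DL : V -> {ffun 'S_3 -> V}) (DR : V -> {ffun 'S_3 -> V}) :=
  [/\ is_fodc la ra d,
      [/\ forall (c : C) u v g, DL (c *: u + v) g = c *: DL u g + DL v g
        & forall (c : C) u v g, DR (c *: u + v) g = c *: DR u g + DR v g],
      [/\ (* left coaction: (Delta (x) id) DL = (id (x) DL) DL, (eps (x) id) DL = id *)
      [/\ forall v g h, DL (DL v g) h = if g == h then DL v g else 0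
        & forall v, \sum_(g : 'S_3) DL v g = v],
      (* right coaction: (DR (x) id) DR = (id (x) Delta) DR, (id (x) eps) DR = id *)
      [/\ forall v g h, DR (DR v g) h = if h == g then DR v g else 0
        & forall v, \sum_(g : 'S_3) DR v g = v]
      & (* the coactions commute: (id (x) DR) DL = (DL (x) id) DR *)
      forall v g h, DR (DL v g) h = DL (DR v h) g],
      (* bicovariant bimodule:
         DL(a v b) = Delta(a) DL(v) Delta(b), DR(a v b) = Delta(a) DR(v) Delta(b) *)
      [/\ forall a v b m, DL (la a (ra v b)) m =
            \sum_(g : 'S_3) \sum_(k : 'S_3) \sum_(h : 'S_3)
              (if (g * k * h)%g == m
               then (a g * b h) *: la (bas g) (ra (DL v k) (bas h)) else 0)
        & forall a v b m, DR (la a (ra v b)) m =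
            \sum_(g : 'S_3) \sum_(k : 'S_3) \sum_(h : 'S_3)
              (if (g * k * h)%g == m
               then (a g * b h) *: la (bas g) (ra (DR v k) (bas h)) else 0)]
    & (* compatibility with d:
         DL(x dy) = Delta(x) (id (x) d) Delta(y),
         DR(x dy) = Delta(x) (d (x) id) Delta(y) *)
      [/\ forall x y m, DL (la x (d y)) m =
            \sum_(g : 'S_3) \sum_(h : 'S_3)
              (if (g * h)%g == m then (x g * y h) *: la (bas g) (d (bas h)) else 0)
        & forall x y m, DR (la x (d y)) m =
            \sum_(g : 'S_3) \sum_(h : 'S_3)
              (if (g * h)%g == m then (x g * y h) *: la (bas g) (d (bas h)) else 0)]].

Definition iso_calculi n (pi : CS3 -> 'M[C]_n) (D : 'M[C]_n)
  (V : lmodType C) (la : CS3 -> V -> V) (ra : V -> CS3 -> V) (d : CS3 -> V)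
  (phi : 'M[C]_n -> V) :=
  [/\ forall (c : C) w1 w2, in_OmegaD pi D w1 -> in_OmegaD pi D w2 ->
        phi (c *: w1 + w2) = c *: phi w1 + phi w2,
      (forall a w, in_OmegaD pi D w -> phi (pi a *m w) = la a (phi w)) /\
      (forall a w, in_OmegaD pi D w -> phi (w *m pi a) = ra (phi w) a),
      forall w1 w2, in_OmegaD pi D w1 -> in_OmegaD pi D w2 ->
        phi w1 = phi w2 -> w1 = w2,
      forall v, exists2 w, in_OmegaD pi D w & phi w = v
    & forall a, phi (commut D (pi a)) = d a].

End Defs.

From Pilot Require Import Defs.
From HB Require Import structures.
From mathcomp Require Import all_boot all_algebra all_fingroup.
From mathcomp Require Import reals complex.
Set Implicit Arguments. Unset Strict Implicit. Unset Printing Implicit Defensive.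
Import GRing.Theory Num.Theory.

(* On Omega^1_D the conjugation average E(w) = sum_g pi(g) w pi(g^-1) commutes
   with pi(A) and with pi^0(A) (first-order condition), hence with the grading
   gamma, which is a sum of products pi(x) pi^0(y); but every one-form
   anticommutes with gamma, so E vanishes on Omega^1_D.  An isomorphism with a
   calculus V therefore forces sum_g g.v.g^-1 = 0 for every v in V.
   In a left-covariant bimodule over CS_3 the left coaction is an S_3-grading
   compatible with both actions, and every element is a sum of g.u with u of
   degree 1.  For such u, the degree-h part of sum_g g.(h.u).g^-1 = 0 is
   sum_(g in C(h)) gh.u.g^-1 = 0.  For the transpositions t this says
   u.t = - t.u, so u commutes with the 3-cycle c = t01 t12 and its inverse, and
   h = c then gives 3 c.u = 0.  Hence V = 0, whereas Omega^1_D <> 0. *)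

Local Open Scope group_scope.

Definition i0 : 'I_3 := Ordinal (isT : 0 < 3)%N.
Definition i1 : 'I_3 := Ordinal (isT : 1 < 3)%N.
Definition i2 : 'I_3 := Ordinal (isT : 2 < 3)%N.

Definition t01 : 'S_3 := tperm i0 i1.
Definition t12 : 'S_3 := tperm i1 i2.
Definition t02 : 'S_3 := tperm i0 i2.
Definition c3 : 'S_3 := t01 * t12.

Lemma ord3P (i : 'I_3) : [\/ i = i0, i = i1 | i = i2].
Proof.
by case: i => [[|[|[|//]]] ?]; [constructor 1|constructor 2|constructor 3]; apply: val_inj.
Qed.

Lemma eq_S3E (g h : 'S_3) :
  (g == h) = [&& g i0 == h i0, g i1 == h i1 & g i2 == h i2].
Proof.
apply/eqP/and3P => [-> //|[/eqP e0 /eqP e1 /eqP e2]].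
by apply/permP => i; case: (ord3P i) => ->.
Qed.

Ltac S3_compute :=
  rewrite /c3 /t01 /t12 /t02 ?eq_S3E ?invMg ?invg1 ?tpermV ?permM ?perm1 ?permE //=.

Lemma tperm_neq1 (T : finType) (x y : T) : x != y -> tperm x y != 1.
Proof. by apply: contra_neq => /permP/(_ x); rewrite tpermL perm1 => ->. Qed.

Lemma c3_inv : c3^-1 = t12 * t01.
Proof. by rewrite /c3 invMg !tpermV. Qed.

Definition S3_elems : seq 'S_3 := [:: 1; t01; t12; t02; c3; c3^-1].

Lemma S3_elemsP : S3_elems =i 'S_3.
Proof.
have card_elems : #|S3_elems| = #|'S_3|.
  by rewrite card_Sn; apply/card_uniqP; rewrite /= !inE; S3_compute.
by apply/(subset_cardP card_elems)/subsetP.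
Qed.

Lemma S3_ind (P : 'S_3 -> Prop) :
  P 1 -> P t01 -> P t12 -> P t02 -> P c3 -> P c3^-1 -> forall g, P g.
Proof.
move=> P1 P01 P12 P02 Pc Pc' g; move: (S3_elemsP g); rewrite inE /= !inE.
by do ![case/orP=> [/eqP->|] | move/eqP->].
Qed.

Lemma cent1_t01 : 'C[t01] = [set 1; t01].
Proof. by apply/setP; elim/S3_ind; rewrite cent1E !inE; S3_compute. Qed.

Lemma cent1_t12 : 'C[t12] = [set 1; t12].
Proof. by apply/setP; elim/S3_ind; rewrite cent1E !inE; S3_compute. Qed.

Lemma cent1_c3 : 'C[c3] = [set 1; c3; c3^-1].
Proof. by apply/setP; elim/S3_ind; rewrite cent1E !inE; S3_compute. Qed.

Local Close Scope group_scope.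

Local Open Scope ring_scope.

Section LinearMaps.
Variables (K : pzRingType) (U W : lmodType K) (f : U -> W).
Hypothesis f_lin : linear f.

Lemma linear_funD u v : f (u + v) = f u + f v.
Proof. by have := f_lin 1 u v; rewrite !scale1r. Qed.

Lemma linear_fun0 : f 0 = 0.
Proof. by apply: (addrI (f 0)); rewrite -linear_funD !addr0. Qed.

Lemma linear_funZ c u : f (c *: u) = c *: f u.
Proof. by rewrite -[c *: u]addr0 f_lin linear_fun0 addr0. Qed.

Lemma linear_funN u : f (- u) = - f u.
Proof. by rewrite -scaleN1r linear_funZ scaleN1r. Qed.

Lemma linear_fun_sum I (r : seq I) (P : pred I) (F : I -> U) :
  f (\sum_(i <- r | P i) F i) = \sum_(i <- r | P i) f (F i).
Proof. exact: (big_morph f linear_funD linear_fun0). Qed.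

End LinearMaps.

(* [mulA] alone would denote MathComp's lemma on fractions. *)
Lemma mulA_bas (R : realType) (g h : 'S_3) :
  Defs.mulA (bas R g) (bas R h) = bas R (g * h)%g.
Proof.
apply/ffunP => x; rewrite !ffunE (bigD1 g) //= big1 => [|k kg]; last first.
  by rewrite !ffunE (negbTE kg) mul0r.
by rewrite !ffunE eqxx mul1r addr0 (can2_eq (mulKVg g) (mulKg g)).
Qed.

Section LeftCovariantBimodule.
Variables (R : realType) (V : lmodType R[i]).
Variables (la : CS3 R -> V -> V) (ra : V -> CS3 R -> V).
Variable DL : V -> {ffun 'S_3 -> V}.
Local Notation bas := (bas R).

Definition left_covariant_bimodule :=
  [/\ is_bimodule la ra,
      forall (c : R[i]) u v g, DL (c *: u + v) g = c *: DL u g + DL v g,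
      forall v g h, DL (DL v g) h = if g == h then DL v g else 0,
      forall v, \sum_(g : 'S_3) DL v g = v
    & forall a v b m, DL (la a (ra v b)) m =
        \sum_(g : 'S_3) \sum_(k : 'S_3) \sum_(h : 'S_3)
          (if (g * k * h)%g == m
           then (a g * b h) *: la (bas g) (ra (DL v k) (bas h)) else 0)].

Lemma bicovariant_fodc_left_covariant d DR :
  is_bicovariant_fodc la ra d DL DR -> left_covariant_bimodule.
Proof. by case=> [[? _ _ _] [? _] [[? ?] _ _] [? _] _]. Qed.

Definition conj_avg v := \sum_(g : 'S_3) la (bas g) (ra v (bas g^-1)).

Definition homogeneous (h : 'S_3) v := forall k, DL v k = if h == k then v else 0.

Hypothesis covV : left_covariant_bimodule.

Let bimV : is_bimodule la ra. Proof. by case: covV. Qed.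

Lemma la_linear a : linear (la a).
Proof. by case: bimV => [[lZ _ _ _] _ _ _ _]; apply: lZ. Qed.
Lemma ra_linear b : linear (ra^~ b).
Proof. by case: bimV => [[_ _ rZ _] _ _ _ _] c u v; apply: rZ. Qed.
Lemma DL_linear g : linear (DL^~ g).
Proof. by case: covV => _ DLZ _ _ _ c u v; apply: DLZ. Qed.

Lemma la1 v : la (bas 1%g) v = v. Proof. by case: bimV => _ _ _ _ []. Qed.
Lemma ra1 v : ra v (bas 1%g) = v. Proof. by case: bimV => _ _ _ _ []. Qed.

Lemma la_bas_mul g h v : la (bas g) (la (bas h) v) = la (bas (g * h)%g) v.
Proof. by case: bimV => _ lM _ _ _; rewrite -lM mulA_bas. Qed.

Lemma ra_bas_mul g h v : ra (ra v (bas g)) (bas h) = ra v (bas (g * h)%g).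
Proof. by case: bimV => _ _ rM _ _; rewrite -rM mulA_bas. Qed.

Lemma ra_la a v b : ra (la a v) b = la a (ra v b).
Proof. by case: bimV. Qed.

Lemma DL_sum_decomposition v : \sum_(g : 'S_3) DL v g = v.
Proof. by case: covV. Qed.

Lemma DL_homogeneous v g : homogeneous g (DL v g).
Proof. by case: covV => _ _ DLK _ _ k; rewrite DLK. Qed.

Lemma DL_bas_act g h v m :
  DL (la (bas g) (ra v (bas h))) m =
  \sum_(k : 'S_3) (if (g * k * h)%g == m then la (bas g) (ra (DL v k) (bas h)) else 0).
Proof.
case: covV => _ _ _ _ ->.
rewrite (bigD1 g) //= [X in _ + X]big1 ?addr0 => [|g' g'g].
  apply: eq_bigr => k _; rewrite (bigD1 h) //= [X in _ + X]big1 ?addr0 => [|h' h'h].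
    by rewrite !ffunE !eqxx mulr1 scale1r.
  by rewrite !ffunE (negbTE h'h) mulr0 scale0r if_same.
apply: big1 => k _; apply: big1 => h' _.
by rewrite !ffunE (negbTE g'g) mul0r scale0r if_same.
Qed.

Lemma homogeneous_act g h k v :
  homogeneous k v -> homogeneous (g * k * h)%g (la (bas g) (ra v (bas h))).
Proof.
move=> hom_v m; rewrite DL_bas_act (bigD1 k) //= big1 ?addr0 => [|k' k'k].
  by rewrite hom_v eqxx.
rewrite hom_v [k == _]eq_sym (negbTE k'k).
by rewrite (linear_fun0 (ra_linear _)) (linear_fun0 (la_linear _)) if_same.
Qed.

Section VanishingAverage.
Hypothesis conj_avg0 : forall v, conj_avg v = 0.

Lemma centralizer_sum_eq0 h u : homogeneous 1 u ->
  \sum_(g in 'C[h]%g) la (bas (g * h)%g) (ra u (bas g^-1)) = 0.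
Proof.
move=> hom_u; have hom_hu : homogeneous h (la (bas h) u).
  by have := homogeneous_act h 1 hom_u; rewrite !mulg1 ra1.
transitivity (DL (conj_avg (la (bas h) u)) h).
  rewrite /conj_avg (linear_fun_sum (DL_linear h)) big_mkcond; apply: eq_bigr => g _.
  rewrite (homogeneous_act _ _ hom_hu) ra_la la_bas_mul cent1E.
  by rewrite (can2_eq (mulgKV g) (mulgK g)).
by rewrite conj_avg0 (linear_fun0 (DL_linear h)).
Qed.

Lemma involution_anticomm t u : homogeneous 1 u ->
  'C[t]%g = [set 1; t]%g -> t != 1%g -> (t * t = 1)%g -> ra u (bas t) = - la (bas t) u.
Proof.
move=> hom_u cent_t t_neq1 tt; have t_inv : t^-1%g = t by rewrite -[t^-1%g]mul1g -tt mulgK.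
have := centralizer_sum_eq0 t hom_u.
rewrite cent_t big_setU1 ?inE 1?eq_sym //= big_set1 mul1g invg1 ra1 tt la1 t_inv.
by rewrite addrC => /eqP; rewrite addr_eq0 => /eqP.
Qed.

Lemma anticomm_mul g h u :
  ra u (bas g) = - la (bas g) u -> ra u (bas h) = - la (bas h) u ->
  ra u (bas (g * h)%g) = la (bas (g * h)%g) u.
Proof.
move=> ug uh; rewrite -ra_bas_mul ug (linear_funN (ra_linear _)) ra_la uh.
by rewrite (linear_funN (la_linear _)) opprK la_bas_mul.
Qed.

Lemma homogeneous1_eq0 u : homogeneous 1 u -> u = 0.
Proof.
move=> hom_u.
have u_t01 := involution_anticomm hom_u cent1_t01 (tperm_neq1 (isT : i0 != i1)) (tperm2 _ _).
have u_t12 := involution_anticomm hom_u cent1_t12 (tperm_neq1 (isT : i1 != i2)) (tperm2 _ _).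
have u_c3 : ra u (bas c3) = la (bas c3) u := anticomm_mul u_t01 u_t12.
have u_c3V : ra u (bas c3^-1) = la (bas c3^-1) u.
  by rewrite c3_inv; apply: anticomm_mul.
have := centralizer_sum_eq0 c3 hom_u.
rewrite cent1_c3 -setUA big_setU1 ?big_setU1 ?big_set1 /=; [|by rewrite !inE; S3_compute..].
rewrite (mul1g c3) invg1 ra1 u_c3V la_bas_mul (mulgK c3) (invgK c3) (mulVg c3) la1 u_c3.
rewrite -mulr2n -mulrS -scaler_nat => /eqP; rewrite scaler_eq0 pnatr_eq0 /= => /eqP c3u0.
by rewrite -[u]la1 -(mulVg c3) -la_bas_mul c3u0 (linear_fun0 (la_linear _)).
Qed.

Lemma left_covariant_trivial (v : V) : v = 0.
Proof.
rewrite -(DL_sum_decomposition v); apply: big1 => g _.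
have hom1 : homogeneous 1 (la (bas g^-1) (DL v g)).
  by have := homogeneous_act g^-1 1 (DL_homogeneous v g); rewrite mulVg mulg1 ra1.
rewrite -[DL v g]la1 -(mulgV g) -la_bas_mul (homogeneous1_eq0 hom1).
exact: linear_fun0 (la_linear _).
Qed.

End VanishingAverage.

End LeftCovariantBimodule.

Lemma mx_comm_anticomm_eq0 (K : numFieldType) n (g X : 'M[K]_n) :
  g *m g = 1%:M -> g *m X = X *m g -> g *m X = - (X *m g) -> X = 0.
Proof.
move=> gg comm; rewrite comm => /eqP; rewrite -addr_eq0 -mulr2n -scaler_nat.
rewrite scaler_eq0 pnatr_eq0 /= => /eqP Xg0.
by rewrite -[X]mulmx1 -gg mulmxA Xg0 mul0mx.
Qed.

Lemma CS3_bas_expansion (R : realType) (x : CS3 R) : x = \sum_h x h *: bas R h.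
Proof.
apply/ffunP => g; rewrite sum_ffunE (bigD1 g) //= big1 => [|h hg].
  by rewrite !ffunE eqxx addr0 -[RHS]/(x g * 1) mulr1.
by rewrite !ffunE eq_sym (negbTE hg) -[LHS]/(x h * 0) mulr0.
Qed.

Section SpectralTriple.
Variables (R : realType) (n : nat) (pi : CS3 R -> 'M[R[i]]_n).
Variables (J : 'cV[R[i]]_n -> 'cV[R[i]]_n) (gamma D : 'M[R[i]]_n).
Hypothesis triple : finite_spectral_triple pi J gamma.
Hypothesis dirac : dirac_operator pi J gamma D.
Local Notation bas := (bas R).
Local Notation pi0 := (opp_rep pi J).
Local Notation OmegaD := (in_OmegaD pi D).

Lemma pi_linear : linear pi.
Proof. by case: triple => [[piZ _ _ _] _ _ _]; apply: piZ. Qed.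

Lemma piM a b : pi (Defs.mulA a b) = pi a *m pi b.
Proof. by case: triple => [[_ -> _ _] _ _ _]. Qed.

Lemma pi_bas_mul g h : pi (bas g) *m pi (bas h) = pi (bas (g * h)%g).
Proof. by rewrite -piM mulA_bas. Qed.

Lemma pi_pi0_comm a b : pi a *m pi0 b = pi0 b *m pi a.
Proof. by case: triple => _ _ [_ _ ->] _. Qed.

Lemma commutD_pi_pi0_comm a b : commut D (pi a) *m pi0 b = pi0 b *m commut D (pi a).
Proof. by case: dirac => _ _ _ /(_ a b) /eqP; rewrite {1}/commut subr_eq0 => /eqP. Qed.

Lemma gamma_pi_comm a : gamma *m pi a = pi a *m gamma.
Proof. by case: triple => _ _ _ [_ _ _ -> _]. Qed.

Lemma gamma_D_anticomm : gamma *m D = - (D *m gamma).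
Proof. by case: dirac => _ _ -> _; rewrite opprK. Qed.

Lemma OmegaD0 : OmegaD 0.
Proof. by exists [::]; rewrite big_nil. Qed.

Lemma OmegaDD w1 w2 : OmegaD w1 -> OmegaD w2 -> OmegaD (w1 + w2).
Proof. by case=> s1 -> [s2 ->]; exists (s1 ++ s2); rewrite big_cat. Qed.

Lemma OmegaD_mull a w : OmegaD w -> OmegaD (pi a *m w).
Proof.
case=> s ->; exists [seq (Defs.mulA a p.1, p.2) | p <- s].
by rewrite big_map mulmx_sumr; apply: eq_bigr => p _; rewrite mulmxA piM.
Qed.

Lemma OmegaD_mulr w b : OmegaD w -> OmegaD (w *m pi b).
Proof.
case=> s ->; rewrite mulmx_suml; elim: s => [|p s IHs].
  by rewrite big_nil; exact: OmegaD0.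
rewrite big_cons; apply: OmegaDD IHs.
(* Leibniz rule: a [D, b] c = a [D, b c] - a b [D, c]. *)
exists [:: (p.1, Defs.mulA p.2 b); (- Defs.mulA p.1 p.2, b)].
rewrite !big_cons big_nil addr0 /= (linear_funN pi_linear) !piM /commut.
by rewrite !mulmxBr !mulmxBl !mulNmx !mulmxA opprK addrACA addNr addr0.
Qed.

Lemma OmegaD_pi0_comm w b : OmegaD w -> w *m pi0 b = pi0 b *m w.
Proof.
case=> s ->; rewrite mulmx_suml mulmx_sumr; apply: eq_bigr => p _.
by rewrite -mulmxA commutD_pi_pi0_comm mulmxA pi_pi0_comm -mulmxA.
Qed.

Lemma OmegaD_gamma_anticomm w : OmegaD w -> gamma *m w = - (w *m gamma).
Proof.
case=> s ->; rewrite mulmx_suml mulmx_sumr -sumrN; apply: eq_bigr => p _.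
rewrite mulmxA gamma_pi_comm -!mulmxA -mulmxN; congr (_ *m _).
rewrite /commut mulmxBr mulmxBl !mulmxA gamma_D_anticomm mulNmx gamma_pi_comm.
by rewrite -!mulmxA gamma_pi_comm gamma_D_anticomm mulmxN !mulmxA opprK opprB addrC.
Qed.

Definition conj_avg_mx w := \sum_(g : 'S_3) pi (bas g) *m w *m pi (bas g^-1).

Lemma conj_avg_mx_bas_comm h w : pi (bas h) *m conj_avg_mx w = conj_avg_mx w *m pi (bas h).
Proof.
rewrite /conj_avg_mx mulmx_suml mulmx_sumr [in RHS](reindex_inj (mulgI h)) /=.
by apply: eq_bigr => g _; rewrite !mulmxA pi_bas_mul -!mulmxA pi_bas_mul invMg mulgKV.
Qed.

Lemma conj_avg_mx_pi_comm x w : pi x *m conj_avg_mx w = conj_avg_mx w *m pi x.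
Proof.
rewrite (CS3_bas_expansion x) (linear_fun_sum pi_linear) mulmx_suml mulmx_sumr.
apply: eq_bigr => h _.
by rewrite (linear_funZ pi_linear) -scalemxAl conj_avg_mx_bas_comm scalemxAr.
Qed.

Lemma conj_avg_mx_pi0_comm w b : OmegaD w -> conj_avg_mx w *m pi0 b = pi0 b *m conj_avg_mx w.
Proof.
move=> Ow; rewrite /conj_avg_mx mulmx_suml mulmx_sumr; apply: eq_bigr => g _.
rewrite -!mulmxA pi_pi0_comm (mulmxA w) OmegaD_pi0_comm //.
by rewrite -mulmxA mulmxA pi_pi0_comm -mulmxA.
Qed.

Lemma conj_avg_mx_gamma_comm w : OmegaD w -> gamma *m conj_avg_mx w = conj_avg_mx w *m gamma.
Proof.
move=> Ow; case: triple => _ _ _ [_ _ _ _ [s ->]].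
rewrite mulmx_suml mulmx_sumr; apply: eq_bigr => p _.
by rewrite -mulmxA -conj_avg_mx_pi0_comm // mulmxA conj_avg_mx_pi_comm -mulmxA.
Qed.

Lemma conj_avg_mx_gamma_anticomm w :
  OmegaD w -> gamma *m conj_avg_mx w = - (conj_avg_mx w *m gamma).
Proof.
move=> Ow; rewrite /conj_avg_mx mulmx_suml mulmx_sumr -sumrN; apply: eq_bigr => g _.
rewrite !mulmxA gamma_pi_comm -!mulmxA (mulmxA gamma) OmegaD_gamma_anticomm //.
by rewrite mulNmx mulmxN -gamma_pi_comm !mulmxA.
Qed.

Lemma conj_avg_mx_eq0 w : OmegaD w -> conj_avg_mx w = 0.
Proof.
move=> Ow; case: triple => _ _ _ [_ gamma2 _ _ _].
apply: (mx_comm_anticomm_eq0 gamma2).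
  exact: conj_avg_mx_gamma_comm.
exact: conj_avg_mx_gamma_anticomm.
Qed.

Section Isomorphism.
Variables (V : lmodType R[i]) (la : CS3 R -> V -> V) (ra : V -> CS3 R -> V).
Variables (d : CS3 R -> V) (phi : 'M[R[i]]_n -> V).
Hypothesis iso : iso_calculi pi D la ra d phi.

Lemma iso_additive w1 w2 : OmegaD w1 -> OmegaD w2 -> phi (w1 + w2) = phi w1 + phi w2.
Proof. by case: iso => phiZ _ _ _ _ O1 O2; have := phiZ 1 w1 w2 O1 O2; rewrite !scale1r. Qed.

Lemma iso0 : phi 0 = 0.
Proof. by apply: (addrI (phi 0)); rewrite -iso_additive ?addr0 //; exact: OmegaD0. Qed.

Lemma iso_conj_avg w : OmegaD w -> phi (conj_avg_mx w) = conj_avg la ra (phi w).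
Proof.
move=> Ow; case: iso => _ [isoL isoR] _ _ _.
pose P M v := OmegaD M /\ phi M = v.
suff [] : P (conj_avg_mx w) (conj_avg la ra (phi w)) by [].
apply: big_ind2 => [|M1 v1 M2 v2 [O1 <-] [O2 <-]|g _].
- by split; [exact: OmegaD0 | exact: iso0].
- by split; [exact: OmegaDD | exact: iso_additive].
- split; first exact/OmegaD_mulr/OmegaD_mull.
  by rewrite -mulmxA isoL ?isoR //; exact: OmegaD_mulr.
Qed.

Lemma iso_conj_avg0 v : conj_avg la ra v = 0.
Proof.
case: iso => _ _ _ /(_ v) [w Ow <-] _.
by rewrite -iso_conj_avg // conj_avg_mx_eq0 // iso0.
Qed.

End Isomorphism.

End SpectralTriple.

Unset Implicit Arguments.

Theorem mainTheorem18 (R : realType) (n : nat)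
  (pi : CS3 R -> 'M[R[i]]_n) (J : 'cV[R[i]]_n -> 'cV[R[i]]_n)
  (gamma D : 'M[R[i]]_n) :
  finite_spectral_triple pi J gamma ->
  dirac_operator pi J gamma D ->
  (exists w, in_OmegaD pi D w /\ w <> 0) ->
  forall (V : lmodType R[i]) (la : CS3 R -> V -> V) (ra : V -> CS3 R -> V)
    (d : CS3 R -> V) (DL DR : V -> {ffun 'S_3 -> V}),
  is_bicovariant_fodc la ra d DL DR ->
  ~ (exists phi : 'M[R[i]]_n -> V, iso_calculi pi D la ra d phi).
Proof.
move=> triple dirac [w [Ow w_neq0]] V la ra d DL DR bicov [phi iso].
have V_trivial := left_covariant_trivial (bicovariant_fodc_left_covariant bicov)
  (iso_conj_avg0 triple dirac iso).
have phi0 := iso0 iso.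
case: iso => _ _ phi_inj _ _; apply/w_neq0/phi_inj => //; first exact: OmegaD0.
by rewrite phi0; apply: V_trivial.
Qed.
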